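(* Let $p(x,y)=\sum_{i,j\ge0}a_{i,j}x^iy^j$ be a polynomial in two variables with coefficients in a commutative ring (with $a_{i,j}=0$ if $i<0$ or $j<0$). For an integer $k\ge 0$ define $$I_k(p(x,y))=\sum_{i=0}^{k}\sum_{j=0}^{k-i}(-1)^j\binom{k-i}{j}a_{i,j}.$$ Then: (1) $I_k(x^m p(x,y))=I_{k-m}(p(x,y))$ for all integers $0\le m\le k$; (2) $I_k(y\,p(x,y))=-\sum_{s=0}^{k-1}I_s(p(x,y))$. *)

(* Bivariate polynomials p(x,y) are represented as
   p : {poly {poly R}}, with the OUTER variable 'X playing the role of x
   and the inner variable (('X : {poly R})%:P) playing the role of y, so
   a_{i,j} = (p`_i)`_j is the coefficient of x^i y^j. *)
From mathcomp Require Import all_boot all_order all_algebra.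
Set Implicit Arguments. Unset Strict Implicit. Unset Printing Implicit Defensive.
Import GRing.Theory.
Local Open Scope ring_scope.

Definition bcoef (R : comNzRingType) (p : {poly {poly R}}) (i j : nat) : R :=
  (p`_i)`_j.

Definition yvar (R : comNzRingType) : {poly {poly R}} := ('X : {poly R})%:P.

Definition Ik (R : comNzRingType) (k : nat) (p : {poly {poly R}}) : R :=
  \sum_(i < k.+1) \sum_(j < (k - i).+1)
     (-1) ^+ j * ('C(k - i, j))%:R * bcoef p i j.

From mathcomp Require Import all_boot all_order all_algebra.

Set Implicit Arguments.
Unset Strict Implicit.
Unset Printing Implicit Defensive.
Import GRing.Theory.
Local Open Scope ring_scope.

(* Writing p = sum_i x^i p_i(y), I_k(p) is the sum over i <= k of the
   binomial transform of order k - i of the coefficients of p_i. Multiplying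
   by x shifts i, which gives (1). Multiplying by y shifts the coefficients of
   every p_i, and the hockey-stick identity C(n, j+1) = sum_(t < n) C(t, j)
   turns the transform of order n of y p_i into minus the sum of the transforms
   of p_i of all orders t < n; regrouping the resulting triangular double sum
   along s = i + t gives (2). *)

Lemma sum_bin_ord k j : (\sum_(t < k) 'C(t, j))%N = 'C(k, j.+1).
Proof.
elim: k => [|k IHk]; first by rewrite big_ord0.
by rewrite big_ord_recr /= IHk binS.
Qed.

Section BinomialTransform.
Variable R : comNzRingType.

Definition binomial_transform (n : nat) (q : {poly R}) : R :=
  \sum_(j < n.+1) (-1) ^+ j * ('C(n, j))%:R * q`_j.

Lemma binomial_transform0 n : binomial_transform n 0 = 0.
Proof. by rewrite /binomial_transform big1 // => j _; rewrite coef0 mulr0. Qed.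

Lemma binomial_transform_widen n N q : (n < N)%N ->
  binomial_transform n q = \sum_(j < N) (-1) ^+ j * ('C(n, j))%:R * q`_j.
Proof.
move=> ltnN; rewrite /binomial_transform.
rewrite (big_ord_widen N (fun j => (-1) ^+ j * ('C(n, j))%:R * q`_j)) //.
rewrite big_mkcond; apply: eq_bigr => j _.
by case: ltnP => // ltnj; rewrite bin_small // mulr0 mul0r.
Qed.

Lemma binomial_transformXM n q :
  binomial_transform n ('X * q) = - \sum_(t < n) binomial_transform t q.
Proof.
have widen (t : 'I_n) : binomial_transform t q =
    \sum_(j < n) (-1) ^+ j * ('C(t, j))%:R * q`_j.
  exact: binomial_transform_widen.
rewrite (eq_bigr _ (fun t _ => widen t)) exchange_big -sumrN.
rewrite /binomial_transform big_ord_recl coefXM mulr0 add0r.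
apply: eq_bigr => j _.
rewrite coefXM /= -mulr_suml -mulr_sumr -natr_sum sum_bin_ord.
by rewrite exprS mulN1r !mulNr.
Qed.

End BinomialTransform.

Lemma big_ord_triangle (V : nmodType) (F : nat -> nat -> V) k :
  \sum_(i < k.+1) \sum_(t < k - i) F i t = \sum_(s < k) \sum_(i < s.+1) F i (s - i)%N.
Proof.
elim: k => [|k IHk]; first by rewrite big_ord0 big_ord1 big_ord0.
rewrite big_ord_recr /= subnn big_ord0 addr0 [RHS]big_ord_recr /= -IHk.
rewrite -big_split /=.
apply: eq_bigr => i _.
by rewrite subSn ?big_ord_recr // -ltnS.
Qed.

Section Ik.
Variable R : comNzRingType.
Implicit Types p : {poly {poly R}}.

Lemma Ik_binomial_transform k p :
  Ik k p = \sum_(i < k.+1) binomial_transform (k - i)%N p`_i.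
Proof. by []. Qed.

Lemma Ik_XM k p : Ik k.+1 ('X * p) = Ik k p.
Proof.
rewrite !Ik_binomial_transform big_ord_recl coefXM /= binomial_transform0 add0r.
by apply: eq_bigr => i _; rewrite coefXM.
Qed.

Lemma Ik_XnM m k p : (m <= k)%N -> Ik k ('X ^+ m * p) = Ik (k - m) p.
Proof.
elim: m k => [|m IHm] k lemk; first by rewrite expr0 mul1r subn0.
case: k lemk => // k lemk.
by rewrite exprS -mulrA Ik_XM IHm.
Qed.

Lemma Ik_yvarM k p : Ik k (yvar R * p) = - \sum_(s < k) Ik s p.
Proof.
rewrite Ik_binomial_transform.
under eq_bigr => i _ do rewrite coefCM binomial_transformXM.
rewrite sumrN (big_ord_triangle (fun i t => binomial_transform t p`_i)).
by under [in RHS]eq_bigr => s _ do rewrite Ik_binomial_transform.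
Qed.

End Ik.

Theorem lemma3p2 (R : comNzRingType) (p : {poly {poly R}}) :
  (forall m k : nat, (m <= k)%N -> Ik k ('X ^+ m * p) = Ik (k - m) p) /\
  (forall k : nat, Ik k (yvar R * p) = - \sum_(s < k) Ik s p).
Proof. by split=> [m k|k]; [exact: Ik_XnM | exact: Ik_yvarM]. Qed.
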